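(* Assume the standing hypotheses, let $\sigma\in(0,1)$ and $C_1>0$. Then there exist $\rho>0$, $\bar\mu\in(0,\hat\mu]$ and $C>0$ such that for all $\mu\in(0,\bar\mu]$ and all $(x,\lambda)\in\mathcal B((x^*,\lambda^* ),\delta)$ with $x>0,\lambda>0$, $\|(x,\lambda)-(x^\mu,\lambda^\mu)\|<\rho$ and $\|F_\mu(x,\lambda)\|\le C_1\mu$, the following is well defined and satisfies $$\|(\Delta x,\Delta\lambda)-(\Delta x^N,\Delta\lambda^N)\|\le C\mu^2,$$ where $(\Delta x^N,\Delta\lambda^N)$ is the Newton direction for $\mu^+=\sigma\mu$ and $(\Delta x,\Delta\lambda)$ is constructed as follows. For $i\in\mathcal A$, $\Delta x_i\in\{\Delta x_i^S,\Delta x_i^C\}$ (chosen arbitrarily per index). $\Delta x_{\mathcal I}=\Delta x_{\mathcal I}^{ls}$ is the solution of $$\big(H_{\mathcal I\mathcal I}+X_{\mathcal I\mathcal I}^{-1}\Lambda_{\mathcal I\mathcal I}\big)\Delta x^{ls}_{\mathcal I}=-\big(\nabla f(x)_{\mathcal I}+H_{\mathcal I\mathcal A}\Delta x_{\mathcal A}\big)+\mu^+X_{\mathcal I\mathcal I}^{-1}e .$$ For $i\in\mathcal I$, $\Delta\lambda_i\in\{\Delta\lambda_i^{ls},\Delta\lambda_i^C\}$ where $\Delta\lambda^{ls}_{\mathcal I}=-\lambda_{\mathcal I}+\mu^+X_{\mathcal I\mathcal I}^{-1}e-X_{\mathcal I\mathcal I}^{-1}\Lambda_{\mathcal I\mathcal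 I}\Delta x^{ls}_{\mathcal I}$. For $i\in\mathcal A$, $\Delta\lambda_i\in\{\Delta\lambda_i^{ls},\Delta\lambda_i^b\}$ where $$\Delta\lambda^b_{\mathcal A}=\nabla f(x)_{\mathcal A}-\lambda_{\mathcal A}+H_{\mathcal A\mathcal A}\Delta x_{\mathcal A}+H_{\mathcal A\mathcal I}\Delta x^{ls}_{\mathcal I},$$ $$\Delta\lambda^{ls}_{\mathcal A}=\big(I+X_{\mathcal A\mathcal A}^2\big)^{-1}\Big[\Delta\lambda^b_{\mathcal A}-X_{\mathcal A\mathcal A}\big(\Lambda_{\mathcal A\mathcal A}X_{\mathcal A\mathcal A}e-\mu^+e+\Lambda_{\mathcal A\mathcal A}\Delta x_{\mathcal A}\big)\Big]$$ (the least-squares solution of the overdetermined system $-\Delta\lambda_{\mathcal A}=-(\Delta\lambda^b_{\mathcal A})$, $X_{\mathcal A\mathcal A}\Delta\lambda_{\mathcal A}=-(\Lambda_{\mathcal A\mathcal A}X_{\mathcal A\mathcal A}e-\mu^+e+\Lambda_{\mathcal A\mathcal A}\Delta x_{\mathcal A})$).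
   Context: Problem: minimize $f(x)$ subject to $x\ge0$, $f:\mathbb R^n\to\mathbb R$ twice continuously differentiable with locally Lipschitz Hessian. Norms Euclidean; $e$ all-ones; $X=\mathrm{diag}(x)$, $\Lambda=\mathrm{diag}(\lambda)$; $H=\nabla^2 f(x)$; subscripts $\mathcal A,\mathcal I$ denote sub-vectors and sub-blocks (first subscript rows, second columns). $F_\mu(x,\lambda)=\begin{bmatrix}\nabla f(x)-\lambda\\ \Lambda Xe-\mu e\end{bmatrix}$, $F'(x,\lambda)=\begin{bmatrix}H&-I\\ \Lambda&X\end{bmatrix}$. The Newton direction for $\mu^+=\sigma\mu$ solves $F'(x,\lambda)(\Delta x^N,\Delta\lambda^N)=-F_{\mu^+}(x,\lambda)$. Partial approximations: $\Delta x_i^S=-\frac{x_i[\nabla f(x)]_i-\mu^+}{x_iH_{ii}+\lambda_i}$, $\Delta x_i^C=-x_i+\mu^+/\lambda_i$, $\Delta\lambda_i^C=-\lambda_i+\mu^+/x_i$. Standing hypotheses: $(x^*,\lambda^* )$ satisfies $\nabla f(x^* )=\lambda^*$, $x^*\ge0$, $\lambda^*\ge0$, $x_i^*\lambda_i^*=0$, $x^*+\lambda^*>0$, $[\nabla^2f(x^* )]_{\mathcal I\mathcal I}\succ0$, where $\mathcal A=\{i:x^*_i=0\}$, $\mathcal I=\{i:x_i^*>0\}$. $\delta>0$: $F'$ nonsingular on $\mathcal B((x^*,\lambda^* ),\delta)$ with $\|F'^{-1}\|\le M$; $\hat\mu>0$: for $\mu\in(0,\hat\mu]$ a Lipschitz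 barrier trajectory $(x^\mu,\lambda^\mu)\in\mathcal B((x^*,\lambda^* ),\delta)$ with $F_\mu(x^\mu,\lambda^\mu)=0$, $\|(x^\mu,\lambda^\mu)-(x^*,\lambda^* )\|\le C_4\mu$ exists. *)

From mathcomp Require Import all_boot all_order all_algebra.
From mathcomp Require Import all_classical all_reals all_analysis.
Set Implicit Arguments. Unset Strict Implicit. Unset Printing Implicit Defensive.
Import Order.TTheory GRing.Theory Num.Theory.
Local Open Scope ring_scope.

Definition enorm (R : realType) (m : nat) (v : 'cV[R]_m) : R :=
  Num.sqrt (\sum_(i < m) (v i 0) ^+ 2).

(* Active index set A = {i : x*_i = 0}; I is its complement. *)
Definition isA (R : realType) (n : nat) (xs : 'cV[R]_n) (i : 'I_n) : bool :=
  xs i 0 == 0.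

Definition Fmu (R : realType) (n : nat) (g : 'cV[R]_n -> 'cV[R]_n) (mu : R)
  (x l : 'cV[R]_n) : 'cV[R]_(n + n) :=
  col_mx (g x - l) (\col_i (l i 0 * x i 0 - mu)).

Definition Fprime (R : realType) (n : nat) (Hf : 'cV[R]_n -> 'M[R]_n)
  (x l : 'cV[R]_n) : 'M[R]_(n + n) :=
  block_mx (Hf x) (- 1%:M) (diag_mx l^T) (diag_mx x^T).

Definition newton_dir (R : realType) (n : nat) (g : 'cV[R]_n -> 'cV[R]_n)
  (Hf : 'cV[R]_n -> 'M[R]_n) (mup : R) (x l : 'cV[R]_n) : 'cV[R]_(n + n) :=
  invmx (Fprime Hf x l) *m (- Fmu g mup x l).

Definition dxS (R : realType) (n : nat) (g : 'cV[R]_n -> 'cV[R]_n)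
  (Hf : 'cV[R]_n -> 'M[R]_n) (mup : R) (x l : 'cV[R]_n) (i : 'I_n) : R :=
  - ((x i 0 * g x i 0 - mup) / (x i 0 * Hf x i i + l i 0)).
Definition dxC (R : realType) (n : nat) (mup : R) (x l : 'cV[R]_n) (i : 'I_n) : R :=
  - x i 0 + mup / l i 0.
Definition dlC (R : realType) (n : nat) (mup : R) (x l : 'cV[R]_n) (i : 'I_n) : R :=
  - l i 0 + mup / x i 0.

Definition dxA_of (R : realType) (n : nat) (xs : 'cV[R]_n) (g : 'cV[R]_n -> 'cV[R]_n)
  (Hf : 'cV[R]_n -> 'M[R]_n) (mup : R) (x l : 'cV[R]_n) (cx : 'I_n -> bool)
  : 'cV[R]_n :=
  \col_i (if isA xs i then (if cx i then dxS g Hf mup x l i else dxC mup x l i)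
          else 0).

Definition ls_sol (R : realType) (n : nat) (xs : 'cV[R]_n) (g : 'cV[R]_n -> 'cV[R]_n)
  (Hf : 'cV[R]_n -> 'M[R]_n) (mup : R) (x l dxA dxI : 'cV[R]_n) : Prop :=
  (forall i, isA xs i -> dxI i 0 = 0) /\
  (forall i, ~~ isA xs i ->
     (Hf x *m dxI) i 0 + l i 0 / x i 0 * dxI i 0
     = - (g x i 0 + (Hf x *m dxA) i 0) + mup / x i 0).

Definition dlb (R : realType) (n : nat) (g : 'cV[R]_n -> 'cV[R]_n)
  (Hf : 'cV[R]_n -> 'M[R]_n) (x l dxA dxI : 'cV[R]_n) (i : 'I_n) : R :=
  g x i 0 - l i 0 + (Hf x *m dxA) i 0 + (Hf x *m dxI) i 0.
Definition dlsI (R : realType) (n : nat) (mup : R) (x l dxI : 'cV[R]_n) (i : 'I_n) : R :=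
  - l i 0 + mup / x i 0 - l i 0 / x i 0 * dxI i 0.
Definition dlsA (R : realType) (n : nat) (g : 'cV[R]_n -> 'cV[R]_n)
  (Hf : 'cV[R]_n -> 'M[R]_n) (mup : R) (x l dxA dxI : 'cV[R]_n) (i : 'I_n) : R :=
  (1 + x i 0 ^+ 2)^-1 *
  (dlb g Hf x l dxA dxI i - x i 0 * (l i 0 * x i 0 - mup + l i 0 * dxA i 0)).

Definition dlam_of (R : realType) (n : nat) (xs : 'cV[R]_n) (g : 'cV[R]_n -> 'cV[R]_n)
  (Hf : 'cV[R]_n -> 'M[R]_n) (mup : R) (x l dxA dxI : 'cV[R]_n)
  (cl : 'I_n -> bool) : 'cV[R]_n :=
  \col_i (if isA xs i
          then (if cl i then dlsA g Hf mup x l dxA dxI i else dlb g Hf x l dxA dxI i)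
          else (if cl i then dlsI mup x l dxI i else dlC mup x l i)).

(* Strict complementarity forces the active components
   x_A and the inactive multipliers l_I to be O(mu), while x_I and l_A stay
   above s/2 for a fixed gap s > 0.  The inexact direction (Dx, Dl) solves the
   Newton system F'(x, l) d = -F_{sigma mu}(x, l) up to a residual of size
   O(mu (|Dx| + mu)), because every neglected term carries a factor x_A or
   l_I.  As F' has a uniformly bounded inverse, the error e between (Dx, Dl)
   and the Newton direction d^N satisfies e <= c mu (|d^N| + e + mu) with
   |d^N| = O(mu); for mu small this gives e = O(mu^2).  The same bounded
   inverse shows that the reduced system defining Dx^ls is uniquely solvable. *)

From mathcomp Require Import all_boot all_order all_algebra.
From mathcomp Require Import all_classical all_reals all_analysis.
From mathcomp Require Import lra ring.
Set Implicit Arguments. Unset Strict Implicit. Unset Printing Implicit Defensive.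
Import Order.TTheory GRing.Theory Num.Theory.
Local Open Scope ring_scope.

Section L1Norm.
Variable R : realType.

(* The l1 norm of a column vector; it is equivalent to [enorm] and much more
   convenient for componentwise estimates. *)
Definition l1norm (m : nat) (v : 'cV[R]_m) : R := \sum_i `|v i 0|.

Lemma l1norm_ge0 m (v : 'cV[R]_m) : 0 <= l1norm v.
Proof. exact: sumr_ge0. Qed.

Lemma abs_le_l1norm m (v : 'cV[R]_m) i : `|v i 0| <= l1norm v.
Proof. by rewrite /l1norm (bigD1 i) //= lerDl sumr_ge0. Qed.

Lemma enorm_ge0 m (v : 'cV[R]_m) : 0 <= enorm v.
Proof. exact: sqrtr_ge0. Qed.

Lemma abs_le_enorm m (v : 'cV[R]_m) i : `|v i 0| <= enorm v.
Proof.
rewrite /enorm -sqrtr_sqr ler_wsqrtr //.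
by rewrite (bigD1 i) //= lerDl sumr_ge0 // => j _; exact: sqr_ge0.
Qed.

Lemma enorm_le_l1norm m (v : 'cV[R]_m) : enorm v <= l1norm v.
Proof.
rewrite /enorm -(ger0_norm (l1norm_ge0 v)) -sqrtr_sqr ler_wsqrtr //.
rewrite expr2 {1}/l1norm mulr_suml; apply: ler_sum => i _.
by rewrite -real_normK ?num_real // expr2 ler_wpM2l // abs_le_l1norm.
Qed.

Lemma l1norm_le m (v : 'cV[R]_m) b : (forall i, `|v i 0| <= b) -> l1norm v <= m%:R * b.
Proof.
move=> hb; apply: (le_trans (ler_sum _ (fun i _ => hb i))).
by rewrite sumr_const card_ord mulr_natl.
Qed.

Lemma l1norm_col m1 m2 (u : 'cV[R]_m1) (v : 'cV[R]_m2) :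
  l1norm (col_mx u v) = l1norm u + l1norm v.
Proof.
by rewrite /l1norm big_split_ord; congr (_ + _); apply: eq_bigr => i _;
  rewrite ?col_mxEu ?col_mxEd.
Qed.

Lemma l1norm_col_le m (u v : 'cV[R]_m) b :
  (forall i, `|u i 0| <= b) -> (forall i, `|v i 0| <= b) ->
  l1norm (col_mx u v) <= (m + m)%:R * b.
Proof. by move=> hu hv; rewrite l1norm_col natrD mulrDl lerD // l1norm_le. Qed.

Lemma l1normN m (v : 'cV[R]_m) : l1norm (- v) = l1norm v.
Proof. by apply: eq_bigr => i _; rewrite mxE normrN. Qed.

Lemma l1normD m (u v : 'cV[R]_m) : l1norm (u + v) <= l1norm u + l1norm v.
Proof. by rewrite -big_split; apply: ler_sum => i _; rewrite mxE ler_normD. Qed.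

Lemma l1norm_eq0 m (v : 'cV[R]_m) : l1norm v <= 0 -> v = 0.
Proof.
move=> h; apply/matrixP => i j; rewrite (ord1 j) mxE; apply/normr0_eq0.
by apply/eqP; rewrite eq_le normr_ge0 andbT (le_trans (abs_le_l1norm v i)).
Qed.

End L1Norm.

Section LinearAlgebra.
Variable R : realType.

(* Entries of column-vector expressions; unlike [mxE] these rewrite only the
   intended entry. *)
Lemma cV_addE m (u v : 'cV[R]_m) i : (u + v) i 0 = u i 0 + v i 0.
Proof. by rewrite mxE. Qed.

Lemma cV_subE m (u v : 'cV[R]_m) i : (u - v) i 0 = u i 0 - v i 0.
Proof. by rewrite !mxE. Qed.

Lemma cV_colE m (F : 'I_m -> R) i : (\col_j F j) i 0 = F i.
Proof. by rewrite mxE. Qed.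

Lemma unitmx_inj n (K : 'M[R]_n) :
  (forall v : 'cV[R]_n, K *m v = 0 -> v = 0) -> K \in unitmx.
Proof.
move=> hK; rewrite unitmxE unitfE -det_tr; apply/det0P => -[v nz_v hv].
have hKv : K *m v^T = 0 by rewrite -[K]trmxK -trmx_mul hv trmx0.
by move: nz_v; rewrite -[v]trmxK (hK _ hKv) trmx0 eqxx.
Qed.

Lemma Fprime_mul n (Hf : 'cV[R]_n -> 'M[R]_n) (x l a b : 'cV[R]_n) :
  Fprime Hf x l *m col_mx a b =
  col_mx (Hf x *m a - b) (\col_i (l i 0 * a i 0 + x i 0 * b i 0)).
Proof.
rewrite /Fprime mul_block_col mulNmx mul1mx !mul_diag_mx; congr col_mx.
by apply/matrixP => i j; rewrite !mxE (ord1 j).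
Qed.

Lemma mulmx_entry_le n (H : 'M[R]_n) (v : 'cV[R]_n) Hb i :
  (forall i j, `|H i j| <= Hb) -> `|(H *m v) i 0| <= Hb * l1norm v.
Proof.
move=> hH; rewrite mxE /l1norm mulr_sumr; apply: le_trans (ler_norm_sum _ _ _) _.
by apply: ler_sum => j _; rewrite normrM ler_wpM2r.
Qed.

Lemma invmx_l1norm_le m (F : 'M[R]_m) M :
  (forall w, enorm (invmx F *m w) <= M * enorm w) ->
  forall w, l1norm (invmx F *m w) <= m%:R * `|M| * l1norm w.
Proof.
move=> hM w; rewrite -mulrA.
have hl1 : l1norm (invmx F *m w) <= m%:R * enorm (invmx F *m w).
  by apply: l1norm_le => i; exact: abs_le_enorm.
apply: le_trans hl1 _; apply: ler_wpM2l => //.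
apply: le_trans (hM w) _; apply: le_trans (_ : `|M| * enorm w <= _).
  by apply: ler_wpM2r; [exact: enorm_ge0 | exact: ler_norm].
by apply: ler_wpM2l => //; exact: enorm_le_l1norm.
Qed.

End LinearAlgebra.

Section ReducedSystem.
Variables (R : realType) (n : nat) (xs : 'cV[R]_n).

(* The matrix of the reduced system defining Dx^ls: on inactive rows it is
   H_II + X_II^-1 Lambda_II (columns restricted to I), on active rows it is
   the identity, which encodes the condition that Dx^ls vanishes on A. *)
Definition reduced_mx (H : 'M[R]_n) (x l : 'cV[R]_n) : 'M[R]_n :=
  \matrix_(i, j) (if isA xs i then (i == j)%:R
     else (if isA xs j then 0 else H i j) + (i == j)%:R * (l i 0 / x i 0)).

Lemma mulmx_inactive (H : 'M[R]_n) (v : 'cV[R]_n) i :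
  (forall j, isA xs j -> v j 0 = 0) ->
  \sum_j (if isA xs j then 0 else H i j) * v j 0 = (H *m v) i 0.
Proof.
move=> hv; rewrite mxE; apply: eq_bigr => j _.
by case: ifP => hj; rewrite ?(hv j hj) ?mulr0 ?mul0r.
Qed.

Lemma reduced_mx_mul (H : 'M[R]_n) (x l v : 'cV[R]_n) i :
  (reduced_mx H x l *m v) i 0 = if isA xs i then v i 0 else
    \sum_j (if isA xs j then 0 else H i j) * v j 0 + l i 0 / x i 0 * v i 0.
Proof.
rewrite mxE; case: ifP => hi.
  rewrite (bigD1 i) //= mxE hi eqxx mul1r big1 ?addr0 // => j /negbTE hj.
  by rewrite mxE hi eq_sym hj mul0r.
under eq_bigr => j _ do rewrite mxE hi mulrDl.
rewrite big_split /= [X in _ + X](bigD1 i) //= eqxx mul1r.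
by rewrite [X in _ + (_ + X)]big1 ?addr0 // => j /negbTE hj; rewrite eq_sym hj !mul0r.
Qed.

Lemma ls_solE g (Hf : 'cV[R]_n -> 'M[R]_n) mup (x l dxA d : 'cV[R]_n) :
  ls_sol xs g Hf mup x l dxA d <->
  reduced_mx (Hf x) x l *m d =
  \col_i (if isA xs i then 0 else - (g x i 0 + (Hf x *m dxA) i 0) + mup / x i 0).
Proof.
split=> [[hA hI] | hK].
  apply/matrixP => i j; rewrite (ord1 j) reduced_mx_mul mxE.
  by case: ifP => hi; [exact: hA | rewrite mulmx_inactive // hI ?hi].
have hA i : isA xs i -> d i 0 = 0.
  by move=> hi; have := (matrixP _ _).2 hK i 0; rewrite reduced_mx_mul mxE hi.
split=> // i /negbTE hi.
by have := (matrixP _ _).2 hK i 0; rewrite reduced_mx_mul mxE hi mulmx_inactive.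
Qed.

End ReducedSystem.

Section ScalarFacts.
Variable R : realType.

(* The weights 1/(1 + y^2) and y/(1 + y^2) (y >= 0) of the least-squares
   solution Dl^ls_A have modulus at most one. *)
Lemma norm_div_1Dsqr (y r : R) : `|r / (1 + y ^+ 2)| <= `|r|.
Proof.
have hy2 := sqr_ge0 y; have hp : 0 < 1 + y ^+ 2 by lra.
rewrite normrM normfV (gtr0_norm hp) ler_pdivrMr //.
by rewrite -{1}[`|r|]mulr1 ler_wpM2l //; lra.
Qed.

Lemma norm_mul_div_1Dsqr (y r : R) : 0 <= y -> `|y * r / (1 + y ^+ 2)| <= `|r|.
Proof.
move=> hy; have hy2 := sqr_ge0 y; have hp : 0 < 1 + y ^+ 2 by lra.
rewrite normrM normfV (gtr0_norm hp) normrM (ger0_norm hy) ler_pdivrMr //.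
have hy1 : y <= 1 + y ^+ 2 by have := sqr_ge0 (y - 1); nra.
by rewrite mulrC ler_wpM2l.
Qed.

(* Near a strictly complementary pair, a nearly centred product p q ~ mu
   forces the component q whose limit vanishes to be O(mu). *)
Lemma complementary_scaling (p q ps mu C1 s : R) :
  0 < s -> s <= ps -> `|p - ps| <= s / 2 -> 0 < q -> `|p * q - mu| <= C1 * mu ->
  q <= 2 * (1 + C1) / s * mu /\ s / 2 <= p.
Proof.
move=> hs hps; rewrite !ler_norml => /andP [hp _] hq /andP [_ hpq].
have hp2 : s / 2 <= p by lra.
split=> //; rewrite -(ler_pM2r (_ : 0 < s / 2)); last lra.
have -> : 2 * (1 + C1) / s * mu * (s / 2) = (1 + C1) * mu.
  by field; rewrite gt_eqF.
by have := ler_wpM2l (ltW hq) hp2; rewrite mulrC; lra.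
Qed.

Lemma gain_dominates (c Hb C1 D mu : R) :
  0 <= c -> 0 <= Hb -> 0 <= C1 -> 0 <= D -> 0 <= mu ->
  let K := c + 1 + 2 * Hb + C1 in
  [/\ Hb <= K, D <= K * (D + mu), c * D <= K * (D + mu)
    & C1 * mu + 2 * Hb * D <= K * (D + mu)].
Proof.
move=> hc hHb hC1 hD hmu K.
have hK : 0 <= K by rewrite /K; lra.
have hKmu : 0 <= K * mu by rewrite mulr_ge0.
have hKD : K * (D + mu) = c * D + D + 2 * Hb * D + C1 * D + K * mu by rewrite /K; ring.
have hcD := mulr_ge0 hc hD; have hHD := mulr_ge0 hHb hD; have hCD := mulr_ge0 hC1 hD.
have hCmu : C1 * mu <= K * mu by rewrite ler_wpM2r // /K; lra.
have hHbK : Hb <= K by rewrite /K; lra.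
by rewrite hKD; split; lra.
Qed.

Lemma double_min_quarter (p q : R) :
  let x := Order.min (p / 4) (q / 4) in x + x <= p / 2 /\ x + x <= q / 2.
Proof.
move=> x; have hp : x <= p / 4 by rewrite /x ge_min lexx.
have hq : x <= q / 4 by rewrite /x ge_min lexx orbT.
by split; lra.
Qed.

Lemma self_bounded_error (e u v : R) :
  0 <= u -> u <= 1 / 2 -> 0 <= v -> e <= u * (v + e) -> e <= 2 * u * v.
Proof.
move=> hu hu2 hv he; have [e_lt0 | e_ge0] := ltP e 0; first nra.
have : e * (1 / 2 - u) >= 0 by apply: mulr_ge0; lra.
nra.
Qed.

Lemma pos_lower_bound n (F : 'I_n -> R) :
  (forall i, 0 < F i) -> exists s : R, 0 < s /\ forall i, s <= F i.
Proof.
move=> hF; have hS : 0 <= \sum_i (F i)^-1 by apply: sumr_ge0 => i _; rewrite invr_ge0 ltW.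
exists (1 + \sum_i (F i)^-1)^-1; split; first by rewrite invr_gt0; lra.
move=> i; rewrite -[F i]invrK lef_pV2 ?posrE ?invr_gt0 //; last lra.
rewrite (bigD1 i) //=.
have hrest : 0 <= \sum_(j | j != i) (F j)^-1.
  by apply: sumr_ge0 => j _; rewrite invr_ge0 ltW.
lra.
Qed.

Lemma small_parameter (m0 c b : R) : 0 < m0 -> 0 <= c -> 0 < b ->
  exists2 m, 0 < m <= m0 & forall mu, 0 <= mu <= m -> c * mu <= b.
Proof.
move=> hm0 hc hb; exists (Order.min m0 (b / (c + 1))).
  by rewrite lt_min hm0 divr_gt0 //= ?ge_min ?lexx //; lra.
move=> mu /andP [hmu0]; rewrite le_min => /andP [_ hmu].
apply: le_trans (_ : c * (b / (c + 1)) <= b); first by rewrite ler_wpM2l.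
by rewrite mulrA ler_pdivrMr; [nra | lra].
Qed.

Lemma small_parameter3 (m0 c1 b1 c2 b2 c3 b3 : R) : 0 < m0 ->
  0 <= c1 -> 0 < b1 -> 0 <= c2 -> 0 < b2 -> 0 <= c3 -> 0 < b3 ->
  exists2 m, 0 < m <= m0 & forall mu, 0 <= mu <= m ->
    [/\ c1 * mu <= b1, c2 * mu <= b2 & c3 * mu <= b3].
Proof.
move=> hm0 hc1 hb1 hc2 hb2 hc3 hb3.
have [m1 /andP [hm1 hm10] h1] := small_parameter hm0 hc1 hb1.
have [m2 /andP [hm2 hm21] h2] := small_parameter hm1 hc2 hb2.
have [m3 /andP [hm3 hm32] h3] := small_parameter hm2 hc3 hb3.
exists m3; first by rewrite hm3 (le_trans hm32) // (le_trans hm21).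
move=> mu /andP [hmu0 hmu3]; have hmu2 := le_trans hmu3 hm32.
have hmu1 := le_trans hmu2 hm21.
by split; [apply: h1 | apply: h2 | apply: h3]; apply/andP.
Qed.

End ScalarFacts.

(* The constant multiplying mu (|Dx| + mu) in the residual of the inexact
   direction, and the resulting constant of the final O(mu^2) estimate. *)
Definition residual_gain (R : realType) (a s Hb C1 : R) : R :=
  a * (2 / s + 1 + 2 * Hb + C1).

Definition error_const (R : realType) (Mq N ka C1 : R) : R :=
  2 * (Mq * N * ka) * (Mq * N * (C1 + 1) + 1) + 1.

Lemma error_const_gt0 (R : realType) (Mq N ka C1 : R) :
  0 <= Mq -> 0 <= N -> 0 <= ka -> 0 <= C1 -> 0 < error_const Mq N ka C1.
Proof.
move=> hMq hN hka hC1; have hMqN := mulr_ge0 hMq hN.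
have hQ : 0 <= Mq * N * (C1 + 1) + 1 by rewrite addr_ge0 // mulr_ge0 // addr_ge0.
by rewrite /error_const ltr_pwDr // mulr_ge0 // mulr_ge0 // mulr_ge0.
Qed.

Section DirectionEstimate.
Variables (R : realType) (n : nat).
Variables (g : 'cV[R]_n -> 'cV[R]_n) (Hf : 'cV[R]_n -> 'M[R]_n) (xs x l : 'cV[R]_n).
Variables (mu sigma C1 s a Hb Mq : R).

Hypotheses (hmu : 0 < mu) (hsigma : 0 < sigma < 1) (hC1 : 0 <= C1) (hs : 0 < s)
  (ha : 0 <= a) (hHb : 0 <= Hb) (hMq : 0 <= Mq).
Hypotheses (hx : forall i, 0 < x i 0) (hl : forall i, 0 < l i 0).
Hypothesis hF : forall k, `|Fmu g mu x l k 0| <= C1 * mu.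
Hypothesis hA : forall i, isA xs i -> x i 0 <= a * mu /\ s / 2 <= l i 0.
Hypothesis hI : forall i, ~~ isA xs i -> l i 0 <= a * mu /\ s / 2 <= x i 0.
Hypothesis hH : forall i j, `|Hf x i j| <= Hb.
Hypotheses (hunit : Fprime Hf x l \in unitmx)
  (hM : forall w, l1norm (invmx (Fprime Hf x l) *m w) <= Mq * l1norm w).
Hypothesis hsmall_Hb : a * Hb * mu <= s / 4.
Hypothesis hsmall : Mq * (n + n)%:R * residual_gain a s Hb C1 * mu <= 1 / 2.

Local Notation mup := (sigma * mu).
Local Notation N := ((n + n)%:R : R).
Local Notation ka := (residual_gain a s Hb C1).
Local Notation K := (2 / s + 1 + 2 * Hb + C1).

Lemma grad_residual_le i : `|g x i 0 - l i 0| <= C1 * mu.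
Proof. by have := hF (lshift n i); rewrite /Fmu col_mxEu !mxE. Qed.

Lemma centring_residual_le i : `|l i 0 * x i 0 - mu| <= C1 * mu.
Proof. by have := hF (rshift n i); rewrite /Fmu col_mxEd !mxE. Qed.

Lemma inv_s_ge0 : 0 <= 2 / s.
Proof. by rewrite divr_ge0 // ltW. Qed.

Lemma residual_gain_ge0 : 0 <= ka.
Proof. by rewrite /residual_gain mulr_ge0 // !addr_ge0 ?inv_s_ge0 ?mulr_ge0. Qed.

Lemma gain_dominates_at D : 0 <= D ->
  [/\ Hb <= K, D <= K * (D + mu), 2 / s * D <= K * (D + mu)
    & C1 * mu + 2 * Hb * D <= K * (D + mu)].
Proof. by move=> hD; apply: gain_dominates => //; [exact: inv_s_ge0 | exact: ltW]. Qed.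

Lemma residual_bound_ge0 D : 0 <= D -> 0 <= ka * mu * (D + mu).
Proof.
move=> hD; have hmu0 := ltW hmu; have hka := residual_gain_ge0.
by apply: mulr_ge0; [apply: mulr_ge0 | apply: addr_ge0].
Qed.

Lemma residual_term_le D t : t <= K * (D + mu) -> a * mu * t <= ka * mu * (D + mu).
Proof.
move=> ht; rewrite (_ : ka * mu * _ = a * mu * (K * (D + mu))).
  by rewrite ler_wpM2l // mulr_ge0 // ltW.
by rewrite /residual_gain; ring.
Qed.

(* The denominator of Dx^S_i does not vanish on the active set, where
   x_i H_ii is O(mu) and l_i >= s/2. *)
Lemma dxS_den_neq0 i : isA xs i -> x i 0 * Hf x i i + l i 0 != 0.
Proof.
move=> hi; have [hxa hla] := hA hi.
have : `|x i 0 * Hf x i i| <= s / 4.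
  rewrite normrM (gtr0_norm (hx i)); apply: le_trans hsmall_Hb; rewrite mulrAC.
  by apply: ler_pM => //; exact: ltW.
have hs4 : 0 < s / 4 by rewrite divr_gt0.
by rewrite ler_norml => /andP [h _]; rewrite gt_eqF //; lra.
Qed.

(* The reduced system has trivial kernel: a kernel vector v extends to a
   vector (v, w) on which F' is O(mu) |v|, which the bound on F'^-1 forbids
   unless v = 0. *)
Lemma reduced_mx_inj (v : 'cV[R]_n) : reduced_mx xs (Hf x) x l *m v = 0 -> v = 0.
Proof.
move=> hv.
have hvA i : isA xs i -> v i 0 = 0.
  by move=> hi; have := (matrixP _ _).2 hv i 0; rewrite reduced_mx_mul hi mxE.
have hvI i : ~~ isA xs i -> (Hf x *m v) i 0 + l i 0 / x i 0 * v i 0 = 0.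
  move=> /negbTE hi; have := (matrixP _ _).2 hv i 0.
  by rewrite reduced_mx_mul hi mxE mulmx_inactive.
pose w := \col_i (if isA xs i then (Hf x *m v) i 0 else - (l i 0 / x i 0 * v i 0)).
have hFvw : l1norm (Fprime Hf x l *m col_mx v w) <= N * (a * mu * Hb * l1norm v).
  have hb0 : 0 <= a * mu * Hb * l1norm v by rewrite !mulr_ge0 ?l1norm_ge0 // ltW.
  rewrite Fprime_mul; apply: l1norm_col_le => i.
    rewrite cV_subE /w cV_colE; case: ifP => hi; first by rewrite subrr normr0.
    by rewrite opprK hvI ?hi // normr0.
  rewrite !cV_colE; case: ifP => hi.
    rewrite hvA // mulr0 add0r normrM (gtr0_norm (hx i)) -mulrA.
    apply: ler_pM; [exact: ltW | exact: normr_ge0 | exact: (hA hi).1 | exact: mulmx_entry_le].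
  have hx0 : x i 0 != 0 by rewrite gt_eqF.
  by rewrite (_ : _ + _ = 0) ?normr0 //; field.
have hv_half : l1norm v <= 1 / 2 * l1norm v.
  apply: (@le_trans _ _ (l1norm (col_mx v w))); first by rewrite l1norm_col lerDl l1norm_ge0.
  rewrite -[col_mx v w](mulKmx hunit); apply: le_trans (hM _) _.
  apply: le_trans (ler_wpM2l hMq hFvw) _.
  rewrite (_ : Mq * _ = Mq * N * (a * Hb) * mu * l1norm v); last by ring.
  apply: ler_wpM2r; first exact: l1norm_ge0.
  apply: le_trans hsmall; apply: ler_wpM2r; first exact: ltW.
  apply: ler_wpM2l; first by rewrite mulr_ge0.
  by rewrite ler_wpM2l //; case: (gain_dominates_at (lexx 0)).
by apply: l1norm_eq0; have hv0 := l1norm_ge0 v; lra.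
Qed.

Lemma Fmu_target_l1 : l1norm (Fmu g mup x l) <= N * ((C1 + 1) * mu).
Proof.
apply: l1norm_col_le => i; rewrite !mxE.
  by apply: le_trans (grad_residual_le i) _; rewrite ler_wpM2r ?lerDl // ltW.
rewrite (_ : _ - _ = (l i 0 * x i 0 - mu) + (1 - sigma) * mu); last by ring.
apply: le_trans (ler_normD _ _) _.
have [hsigma0 hsigma1] := andP hsigma.
rewrite (ger0_norm (_ : 0 <= (1 - sigma) * mu)); last by rewrite mulr_ge0 ?subr_ge0 ?ltW.
have hc := centring_residual_le i; have hsmu : 0 <= sigma * mu by rewrite mulr_ge0 ?ltW.
lra.
Qed.

Section FixedChoice.
Variables (cx cl : 'I_n -> bool) (dxI : 'cV[R]_n).
Local Notation dxA := (dxA_of xs g Hf mup x l cx).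
Local Notation dx := (dxA + dxI).
Local Notation dl := (dlam_of xs g Hf mup x l dxA dxI cl).
Local Notation D := (l1norm dx).
Local Notation B := (ka * mu * (D + mu)).
Hypothesis hdxI : ls_sol xs g Hf mup x l dxA dxI.

Lemma dx_entry i : dx i 0 = dxA i 0 + dxI i 0.
Proof. by rewrite mxE. Qed.

Lemma Hdx_entry i : (Hf x *m dx) i 0 = (Hf x *m dxA) i 0 + (Hf x *m dxI) i 0.
Proof. by rewrite mulmxDr mxE. Qed.

(* On the active set the complementarity row of the residual, evaluated at
   Dl^b, is x_i times a quantity of size O(mu + |Dx|): both choices Dx^S and
   Dx^C solve that row up to an O(|H Dx|) term. *)
Lemma active_complementarity_le i : isA xs i ->
  `|l i 0 * dx i 0 + x i 0 * (g x i 0 - l i 0 + (Hf x *m dx) i 0) + (l i 0 * x i 0 - mup)|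
    <= a * mu * (C1 * mu + 2 * Hb * D).
Proof.
move=> hi; have [hxa _] := hA hi.
have hdx : dx i 0 = dxA i 0 by rewrite dx_entry hdxI.1 // addr0.
have hdA : dxA i 0 = if cx i then dxS g Hf mup x l i else dxC mup x l i.
  by rewrite mxE hi.
have hHD := mulmx_entry_le dx i hH; have hdxD := abs_le_l1norm dx i.
have hD0 : 0 <= Hb * D by rewrite mulr_ge0 // l1norm_ge0.
have hC1mu : 0 <= C1 * mu by rewrite mulr_ge0 // ltW.
suff [t -> ht] : exists2 t, l i 0 * dx i 0 + x i 0 * (g x i 0 - l i 0 + (Hf x *m dx) i 0)
    + (l i 0 * x i 0 - mup) = x i 0 * t & `|t| <= C1 * mu + 2 * Hb * D.
  by rewrite normrM (gtr0_norm (hx i)) ler_pM // ltW.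
move: hdA; case: (cx i) => hdA.
  exists ((Hf x *m dx) i 0 - Hf x i i * dx i 0).
    by rewrite hdx hdA /dxS; field; exact: dxS_den_neq0.
  apply: le_trans (ler_normB _ _) _; rewrite normrM.
  have hHii : `|Hf x i i| * `|dx i 0| <= Hb * D by rewrite ler_pM.
  lra.
exists ((g x i 0 - l i 0) + (Hf x *m dx) i 0).
  by rewrite hdx hdA /dxC; field; rewrite gt_eqF.
apply: le_trans (ler_normD _ _) _; have hg := grad_residual_le i; lra.
Qed.

(* Both choices of Dl on the active set leave an O(mu (|Dx| + mu)) residual:
   Dl^b solves the gradient row exactly, and the least-squares choice splits
   the complementarity residual between the two rows. *)
Lemma active_residual i : isA xs i ->
  `|(Hf x *m dx) i 0 - dl i 0 + (g x i 0 - l i 0)| <= B /\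
  `|l i 0 * dx i 0 + x i 0 * dl i 0 + (l i 0 * x i 0 - mup)| <= B.
Proof.
move=> hi; have hdx : dx i 0 = dxA i 0 by rewrite dx_entry hdxI.1 // addr0.
have hb : dlb g Hf x l dxA dxI i = g x i 0 - l i 0 + (Hf x *m dx) i 0.
  by rewrite /dlb Hdx_entry; ring.
set r := l i 0 * dx i 0 + x i 0 * (g x i 0 - l i 0 + (Hf x *m dx) i 0)
  + (l i 0 * x i 0 - mup).
have hr : `|r| <= B.
  apply: le_trans (active_complementarity_le hi) _; apply: residual_term_le.
  by case: (gain_dominates_at (l1norm_ge0 dx)).
have hp : 1 + x i 0 ^+ 2 != 0 by rewrite gt_eqF // ltr_pwDl // sqr_ge0.
rewrite /dlam_of mxE hi; case: (cl i); last first.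
  rewrite hb; split; last exact: hr.
  by rewrite (_ : _ + _ = 0) ?normr0 ?residual_bound_ge0 ?l1norm_ge0 //; ring.
rewrite /dlsA hb; split.
  rewrite (_ : _ + _ = x i 0 * r / (1 + x i 0 ^+ 2)); last by rewrite /r hdx; field.
  by apply: le_trans hr; rewrite norm_mul_div_1Dsqr // ltW.
rewrite (_ : _ + _ = r / (1 + x i 0 ^+ 2)); last by rewrite /r hdx; field.
exact: le_trans (norm_div_1Dsqr _ _) hr.
Qed.

(* On the inactive set Dl^ls solves both rows exactly, by the equation
   defining Dx^ls, while Dl^C leaves residuals (l_i/x_i) Dx_i and l_i Dx_i,
   both O(mu |Dx|) since l_i = O(mu) and x_i >= s/2. *)
Lemma inactive_residual i : ~~ isA xs i ->
  `|(Hf x *m dx) i 0 - dl i 0 + (g x i 0 - l i 0)| <= B /\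
  `|l i 0 * dx i 0 + x i 0 * dl i 0 + (l i 0 * x i 0 - mup)| <= B.
Proof.
move=> hi; have [hla hxs] := hI hi.
have hx0 : x i 0 != 0 by rewrite gt_eqF.
have hdx : dx i 0 = dxI i 0 by rewrite dx_entry mxE (negbTE hi) add0r.
have hls := hdxI.2 i hi.
have [_ hD1 hD2 _] := gain_dominates_at (l1norm_ge0 dx).
have hlx0 : 0 <= l i 0 / x i 0 by rewrite divr_ge0 // ltW.
have hlx : l i 0 / x i 0 <= a * mu * (2 / s).
  rewrite ler_pdivrMr //; apply: le_trans hla _.
  rewrite -[a * mu * _ * _]mulrA; apply: ler_peMr; first by rewrite mulr_ge0 // ltW.
  have hs1 : 2 / s * (s / 2) = 1 by field; rewrite gt_eqF.
  apply: le_trans (_ : 2 / s * (s / 2) <= _); first by rewrite hs1.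
  by rewrite ler_wpM2l ?inv_s_ge0.
have hB0 : 0 <= B by rewrite residual_bound_ge0 ?l1norm_ge0.
have norm_eq (E F : R) : E = F -> `|F| <= B -> `|E| <= B by move->.
rewrite /dlam_of mxE (negbTE hi) Hdx_entry hdx; case: (cl i); rewrite /dlsI /dlC.
  split; apply: (norm_eq _ 0); rewrite ?normr0 //; last by field.
  by move: hls; lra.
split.
  apply: (norm_eq _ (- (l i 0 / x i 0 * dxI i 0))); first by move: hls; lra.
  rewrite normrN normrM (ger0_norm hlx0) -hdx; apply: le_trans (residual_term_le hD2).
  by rewrite mulrA ler_pM ?abs_le_l1norm.
apply: (norm_eq _ (l i 0 * dxI i 0)); first by field.
rewrite normrM (gtr0_norm (hl i)) -hdx; apply: le_trans (residual_term_le hD1).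
by rewrite ler_pM ?abs_le_l1norm // ltW.
Qed.

Lemma newton_residual_l1 :
  l1norm (Fprime Hf x l *m col_mx dx dl + Fmu g mup x l) <= N * B.
Proof.
have residual_entry i :
    `|(Hf x *m dx) i 0 - dl i 0 + (g x i 0 - l i 0)| <= B /\
    `|l i 0 * dx i 0 + x i 0 * dl i 0 + (l i 0 * x i 0 - mup)| <= B.
  case: (boolP (isA xs i)) => hi.
    exact: (active_residual hi).
  exact: (inactive_residual hi).
rewrite Fprime_mul /Fmu add_col_mx; apply: l1norm_col_le => i.
  by rewrite cV_addE !cV_subE; case: (residual_entry i).
rewrite cV_addE [X in `|X + _|]cV_colE [X in `|_ + X|]cV_colE.
by case: (residual_entry i).
Qed.

(* The main estimate: the inexact direction differs from the Newton direction
   by F'^-1 applied to the residual, whose size O(mu (|Dx| + mu)) is in turn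
   controlled by the size O(mu) of the Newton direction itself. *)
Lemma direction_error :
  enorm (col_mx dx dl - newton_dir g Hf mup x l) <= error_const Mq N ka C1 * mu ^+ 2.
Proof.
set dt := col_mx dx dl; set d := newton_dir g Hf mup x l; set e := l1norm (dt - d).
set P := Mq * N * ka; set Q := Mq * N * (C1 + 1) + 1.
have hdiff : dt - d = invmx (Fprime Hf x l) *m (Fprime Hf x l *m dt + Fmu g mup x l).
  by rewrite /d /newton_dir mulmxDr mulKmx // mulmxN opprK.
have he : e <= P * mu * (l1norm dx + mu).
  rewrite /e hdiff; apply: le_trans (hM _) _.
  rewrite (_ : P * mu * _ = Mq * (N * B)); last by rewrite /P; ring.
  by rewrite ler_wpM2l // newton_residual_l1.
have hd : l1norm d <= Mq * (N * ((C1 + 1) * mu)).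
  by apply: le_trans (hM _) _; rewrite l1normN ler_wpM2l // Fmu_target_l1.
have hdQ : l1norm d + mu <= Q * mu.
  by rewrite /Q mulrDl mul1r lerD2r (le_trans hd) // !mulrA.
have hD : l1norm dx <= l1norm d + e.
  apply: le_trans (_ : l1norm dt <= _); first by rewrite l1norm_col lerDl l1norm_ge0.
  by rewrite -[dt](subrK d) addrC (le_trans (l1normD _ _)) // addrC.
have hmu0 := ltW hmu; have hka := residual_gain_ge0; have hN : 0 <= N := ler0n _ _.
have hPmu : 0 <= P * mu.
  by apply: mulr_ge0 => //; apply: mulr_ge0 => //; exact: mulr_ge0.
have hQmu : 0 <= Q * mu by apply: le_trans _ hdQ; rewrite addr_ge0 ?l1norm_ge0.
have he2 : e <= 2 * (P * mu) * (Q * mu).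
  apply: self_bounded_error => //; apply: le_trans he _; rewrite ler_wpM2l //; lra.
apply: le_trans (enorm_le_l1norm _) _; apply: le_trans he2 _.
rewrite (_ : 2 * _ * _ = 2 * P * Q * mu ^+ 2); last by ring.
by apply: ler_wpM2r; rewrite ?sqr_ge0 // /error_const -/P -/Q lerDl.
Qed.

End FixedChoice.

Lemma inexact_newton_estimate :
  (forall i, isA xs i -> x i 0 * Hf x i i + l i 0 != 0) /\
  forall cx cl : 'I_n -> bool,
    let dxA := dxA_of xs g Hf mup x l cx in
    (exists dxI, ls_sol xs g Hf mup x l dxA dxI) /\
    (forall d1 d2, ls_sol xs g Hf mup x l dxA d1 ->
                   ls_sol xs g Hf mup x l dxA d2 -> d1 = d2) /\
    (forall dxI, ls_sol xs g Hf mup x l dxA dxI ->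
       enorm (col_mx (dxA + dxI) (dlam_of xs g Hf mup x l dxA dxI cl)
              - newton_dir g Hf mup x l) <= error_const Mq N ka C1 * mu ^+ 2).
Proof.
split=> [i|cx cl dxA]; first exact: dxS_den_neq0.
have hK : reduced_mx xs (Hf x) x l \in unitmx by exact: unitmx_inj reduced_mx_inj.
split; first by eexists; apply/ls_solE; apply: (mulKVmx hK).
split=> [d1 d2 /ls_solE h1 /ls_solE h2 | dxI hdxI]; last exact: direction_error.
by apply/eqP; rewrite -subr_eq0; apply/eqP/reduced_mx_inj; rewrite mulmxBr h1 h2 subrr.
Qed.

End DirectionEstimate.

Section Localization.
Variables (R : realType) (n : nat).

Lemma strict_complementarity_gap (xs ls : 'cV[R]_n) :
  (forall i, xs i 0 * ls i 0 = 0) -> (forall i, 0 < xs i 0 + ls i 0) ->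
  exists2 s : R, 0 < s &
    (forall i, isA xs i -> s <= ls i 0) /\ (forall i, ~~ isA xs i -> s <= xs i 0).
Proof.
move=> hcomp hstrict; have [s [hs hsle]] := pos_lower_bound hstrict.
exists s => //; split=> i hi; have := hsle i.
  by move: hi; rewrite /isA => /eqP ->; rewrite add0r.
move: hi; rewrite /isA => /negbTE hi.
have /eqP := hcomp i; rewrite mulf_eq0 hi /= => /eqP ->.
by rewrite addr0.
Qed.

(* The bound on the Hessian entries near x* provided by its Lipschitz
   continuity. *)
Definition hessian_bound (H : 'M[R]_n) (L r0 : R) : R :=
  \sum_i \sum_j `|H i j| + `|L| * r0.

Lemma hessian_bound_ge0 (H : 'M[R]_n) L r0 : 0 < r0 -> 0 <= hessian_bound H L r0.
Proof.
move=> hr0; apply: addr_ge0; last by rewrite mulr_ge0 // ltW.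
by apply: sumr_ge0 => i _; exact: sumr_ge0.
Qed.

Lemma hessian_entry_bound (Hf : 'cV[R]_n -> 'M[R]_n) (xs : 'cV[R]_n) r0 L :
  0 < r0 ->
  (forall y z : 'cV[R]_n, enorm (y - xs) < r0 -> enorm (z - xs) < r0 ->
      forall w : 'cV[R]_n, enorm ((Hf y - Hf z) *m w) <= L * enorm (y - z) * enorm w) ->
  forall y, enorm (y - xs) < r0 -> forall i j, `|Hf y i j| <= hessian_bound (Hf xs) L r0.
Proof.
move=> hr0 hL y hy i j.
pose w : 'cV[R]_n := \col_k (k == j)%:R.
have hw : enorm w = 1.
  rewrite /enorm (bigD1 j) //= big1 ?addr0 => [|k /negbTE hk].
    by rewrite /w mxE eqxx expr1n sqrtr1.
  by rewrite /w mxE hk expr0n.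
have hDw : ((Hf y - Hf xs) *m w) i 0 = Hf y i j - Hf xs i j.
  rewrite mxE (bigD1 j) //= big1 ?addr0 => [|k /negbTE hk].
    by rewrite /w cV_colE eqxx mulr1 !mxE.
  by rewrite /w cV_colE hk mulr0.
have hxs : enorm (xs - xs) < r0.
  by rewrite subrr /enorm big1 ?sqrtr0 // => k _; rewrite mxE expr0n.
have hdiff : `|Hf y i j - Hf xs i j| <= `|L| * r0.
  rewrite -hDw; apply: le_trans (abs_le_enorm _ i) _; apply: le_trans (hL _ _ hy hxs w) _.
  rewrite hw mulr1; apply: le_trans (ler_norm _) _; rewrite normrM.
  by rewrite ler_wpM2l // (ger0_norm (enorm_ge0 _)) ltW.
have hxs_ij : `|Hf xs i j| <= \sum_i \sum_j `|Hf xs i j|.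
  rewrite (bigD1 i) //= (bigD1 j) //= -addrA lerDl.
  by rewrite addr_ge0 ?sumr_ge0 // => k _; rewrite sumr_ge0.
rewrite -[Hf y i j](subrK (Hf xs i j)); apply: le_trans (ler_normD _ _) _.
by rewrite /hessian_bound addrC lerD.
Qed.

Lemma col_mx_entry_le m (u v : 'cV[R]_m) i :
  `|u i 0| <= enorm (col_mx u v) /\ `|v i 0| <= enorm (col_mx u v).
Proof.
by split; [rewrite -(col_mxEu u v) | rewrite -(col_mxEd u v)]; exact: abs_le_enorm.
Qed.

Lemma col_mx_dist_entries (x l y k z m : 'cV[R]_n) d1 d2 :
  enorm (col_mx x l - col_mx y k) <= d1 -> enorm (col_mx y k - col_mx z m) <= d2 ->
  forall i, `|x i 0 - z i 0| <= d1 + d2 /\ `|l i 0 - m i 0| <= d1 + d2.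
Proof.
move=> h1 h2 i; rewrite !opp_col_mx !add_col_mx in h1 h2.
have entry (u v w : 'cV[R]_n) : `|u i 0 - w i 0| <= `|(u - v) i 0| + `|(v - w) i 0|.
  rewrite !cV_subE (_ : u i 0 - w i 0 = (u i 0 - v i 0) + (v i 0 - w i 0)) ?ler_normD //.
  by rewrite addrA subrK.
have [hx1 hl1] := col_mx_entry_le (x - y) (l - k) i.
have [hx2 hl2] := col_mx_entry_le (y - z) (k - m) i.
have ex := entry x y z; have el := entry l k m.
by split; lra.
Qed.

Lemma enorm_lt_of_entries (v : 'cV[R]_n) d r : 0 < r ->
  (forall i, `|v i 0| <= d) -> d <= r / (n%:R + 1) / 2 -> enorm v < r.
Proof.
move=> hr hv hd; apply: le_lt_trans (enorm_le_l1norm v) _.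
apply: le_lt_trans (l1norm_le hv) _; apply: le_lt_trans (ler_wpM2l (ler0n _ n) hd) _.
have hn : (0 : R) <= n%:R := ler0n _ n.
have hT : (0 : R) < n%:R + 1 by rewrite ltr_wpDl.
by rewrite !mulrA !ltr_pdivrMr //; nra.
Qed.

Lemma interior_scaling (xs ls x l : 'cV[R]_n) mu C1 s d :
  0 < s -> (forall i, isA xs i -> s <= ls i 0) -> (forall i, ~~ isA xs i -> s <= xs i 0) ->
  (forall i, 0 < x i 0) -> (forall i, 0 < l i 0) -> d <= s / 2 ->
  (forall i, `|x i 0 - xs i 0| <= d /\ `|l i 0 - ls i 0| <= d) ->
  (forall i, `|l i 0 * x i 0 - mu| <= C1 * mu) ->
  (forall i, isA xs i -> x i 0 <= 2 * (1 + C1) / s * mu /\ s / 2 <= l i 0) /\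
  (forall i, ~~ isA xs i -> l i 0 <= 2 * (1 + C1) / s * mu /\ s / 2 <= x i 0).
Proof.
move=> hs hsA hsI hx hl hd hent hc; split=> i hi; have [hxd hld] := hent i.
  exact: complementary_scaling hs (hsA i hi) (le_trans hld hd) (hx i) (hc i).
apply: complementary_scaling hs (hsI i hi) (le_trans hxd hd) (hl i) _.
by rewrite mulrC hc.
Qed.

End Localization.

Section PointEstimate.
Variables (R : realType) (n : nat) (g : 'cV[R]_n -> 'cV[R]_n) (Hf : 'cV[R]_n -> 'M[R]_n).
Variables (xs ls : 'cV[R]_n) (delta M s r0 L sigma C1 : R).

Hypotheses (hs : 0 < s) (hsA : forall i, isA xs i -> s <= ls i 0)
  (hsI : forall i, ~~ isA xs i -> s <= xs i 0).
Hypotheses (hr0 : 0 < r0) (hL : forall y z : 'cV[R]_n, enorm (y - xs) < r0 ->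
  enorm (z - xs) < r0 ->
  forall w : 'cV[R]_n, enorm ((Hf y - Hf z) *m w) <= L * enorm (y - z) * enorm w).
Hypothesis hF' : forall x l : 'cV[R]_n, enorm (col_mx x l - col_mx xs ls) < delta ->
  Fprime Hf x l \in unitmx /\
  forall w : 'cV[R]_(n + n), enorm (invmx (Fprime Hf x l) *m w) <= M * enorm w.
Hypotheses (hsigma : 0 < sigma < 1) (hC1 : 0 < C1).

Local Notation Hb := (hessian_bound (Hf xs) L r0).
Local Notation a := (2 * (1 + C1) / s).
Local Notation Mq := ((n + n)%:R * `|M|).
Local Notation ka := (residual_gain a s Hb C1).

Lemma point_estimate mu (x l : 'cV[R]_n) d :
  0 < mu -> (forall i, 0 < x i 0) -> (forall i, 0 < l i 0) ->
  enorm (col_mx x l - col_mx xs ls) < delta ->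
  (forall i, `|x i 0 - xs i 0| <= d /\ `|l i 0 - ls i 0| <= d) ->
  d <= s / 2 -> d <= r0 / (n%:R + 1) / 2 ->
  enorm (Fmu g mu x l) <= C1 * mu ->
  a * Hb * mu <= s / 4 -> Mq * (n + n)%:R * ka * mu <= 1 / 2 ->
  let mup := sigma * mu in
  (forall i, isA xs i -> x i 0 * Hf x i i + l i 0 != 0) /\
  forall cx cl : 'I_n -> bool,
    let dxA := dxA_of xs g Hf mup x l cx in
    (exists dxI, ls_sol xs g Hf mup x l dxA dxI) /\
    (forall d1 d2, ls_sol xs g Hf mup x l dxA d1 ->
                   ls_sol xs g Hf mup x l dxA d2 -> d1 = d2) /\
    (forall dxI, ls_sol xs g Hf mup x l dxA dxI ->
       enorm (col_mx (dxA + dxI) (dlam_of xs g Hf mup x l dxA dxI cl)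
              - newton_dir g Hf mup x l) <= error_const Mq (n + n)%:R ka C1 * mu ^+ 2).
Proof.
move=> hmu hx hl hdel hent hds hdr hFn hsmall_Hb hsmall.
have ha : 0 <= a.
  by apply: divr_ge0 (ltW hs); apply: mulr_ge0 => //; apply: addr_ge0 (ltW hC1).
have hF k : `|Fmu g mu x l k 0| <= C1 * mu := le_trans (abs_le_enorm _ k) hFn.
have hc i : `|l i 0 * x i 0 - mu| <= C1 * mu.
  by have := hF (rshift n i); rewrite /Fmu col_mxEd !mxE.
have [hA hI] := interior_scaling hs hsA hsI hx hl hds hent hc.
have hxr : enorm (x - xs) < r0.
  by apply: (enorm_lt_of_entries hr0) hdr => i; rewrite cV_subE; case: (hent i).
have [hunit hMb] := hF' hdel.
exact: (inexact_newton_estimate hmu hsigma (ltW hC1) hs ha (hessian_bound_ge0 _ _ hr0)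
  (mulr_ge0 (ler0n _ _) (normr_ge0 M)) hx hl hF hA hI (hessian_entry_bound hr0 hL hxr)
  hunit (invmx_l1norm_le hMb) hsmall_Hb hsmall).
Qed.

End PointEstimate.

Theorem theorem1 (R : realType) (n : nat)
  (f : 'cV[R]_n -> R) (g : 'cV[R]_n -> 'cV[R]_n) (Hf : 'cV[R]_n -> 'M[R]_n)
  (* g is the gradient and Hf the Hessian of f (directional derivatives) *)
  (hg : forall (x v : 'cV[R]_n),
      is_derive (0 : R) (1 : R) (fun t : R => f (x + t *: v)) (((g x)^T *m v) 0 0))
  (hH : forall (x v : 'cV[R]_n) (i : 'I_n),
      is_derive (0 : R) (1 : R) (fun t : R => g (x + t *: v) i 0) ((Hf x *m v) i 0))
  (* locally Lipschitz Hessian *)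
  (hLip : forall x : 'cV[R]_n, exists r : R, 0 < r /\ exists L : R,
      forall y z : 'cV[R]_n, enorm (y - x) < r -> enorm (z - x) < r ->
      forall w : 'cV[R]_n, enorm ((Hf y - Hf z) *m w) <= L * enorm (y - z) * enorm w)
  (xs ls : 'cV[R]_n)
  (hKKT : g xs = ls)
  (hxs : forall i, 0 <= xs i 0) (hls : forall i, 0 <= ls i 0)
  (hcomp : forall i, xs i 0 * ls i 0 = 0)
  (hstrict : forall i, 0 < xs i 0 + ls i 0)
  (hpd : forall v : 'cV[R]_n, (forall i, isA xs i -> v i 0 = 0) -> v != 0 ->
      0 < (v^T *m Hf xs *m v) 0 0)
  (delta M : R) (hdelta : 0 < delta)
  (hF' : forall x l : 'cV[R]_n, enorm (col_mx x l - col_mx xs ls) < delta ->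
      Fprime Hf x l \in unitmx /\
      forall w : 'cV[R]_(n + n), enorm (invmx (Fprime Hf x l) *m w) <= M * enorm w)
  (muhat C4 : R) (xmu lmu : R -> 'cV[R]_n) (hmuhat : 0 < muhat)
  (htraj : forall mu : R, 0 < mu <= muhat ->
      enorm (col_mx (xmu mu) (lmu mu) - col_mx xs ls) < delta /\
      Fmu g mu (xmu mu) (lmu mu) = 0 /\
      enorm (col_mx (xmu mu) (lmu mu) - col_mx xs ls) <= C4 * mu)
  (htrajLip : exists L : R, forall mu1 mu2 : R, 0 < mu1 <= muhat -> 0 < mu2 <= muhat ->
      enorm (col_mx (xmu mu1) (lmu mu1) - col_mx (xmu mu2) (lmu mu2))
        <= L * `|mu1 - mu2|)
  (sigma C1 : R) (hsigma : 0 < sigma < 1) (hC1 : 0 < C1) :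
  exists rho mubar C : R, 0 < rho /\ 0 < mubar <= muhat /\ 0 < C /\
    forall (mu : R) (x l : 'cV[R]_n), 0 < mu <= mubar ->
      (forall i, 0 < x i 0) -> (forall i, 0 < l i 0) ->
      enorm (col_mx x l - col_mx xs ls) < delta ->
      enorm (col_mx x l - col_mx (xmu mu) (lmu mu)) < rho ->
      enorm (Fmu g mu x l) <= C1 * mu ->
      let mup := sigma * mu in
      (forall i, isA xs i -> x i 0 * Hf x i i + l i 0 != 0) /\
      forall cx cl : 'I_n -> bool,
        let dxA := dxA_of xs g Hf mup x l cx in
        (exists dxI, ls_sol xs g Hf mup x l dxA dxI) /\
        (forall d1 d2, ls_sol xs g Hf mup x l dxA d1 ->
                       ls_sol xs g Hf mup x l dxA d2 -> d1 = d2) /\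
        (forall dxI, ls_sol xs g Hf mup x l dxA dxI ->
           enorm (col_mx (dxA + dxI) (dlam_of xs g Hf mup x l dxA dxI cl)
                  - newton_dir g Hf mup x l) <= C * mu ^+ 2).
Proof.
have [r0 [hr0 [L hL]]] := hLip xs.
have [s hs [hsA hsI]] := strict_complementarity_gap hcomp hstrict.
pose Hb := hessian_bound (Hf xs) L r0; pose a := 2 * (1 + C1) / s.
pose Mq := (n + n)%:R * `|M|; pose ka := residual_gain a s Hb C1.
pose rho := Order.min (s / 4) (r0 / (n%:R + 1) / 4).
have hHb : 0 <= Hb := hessian_bound_ge0 _ _ hr0.
have ha : 0 <= a by rewrite divr_ge0 ?ltW //; lra.
have hMq : 0 <= Mq := mulr_ge0 (ler0n _ _) (normr_ge0 M).
have hka : 0 <= ka := residual_gain_ge0 (ltW hC1) hs ha hHb.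
have hP : 0 <= Mq * (n + n)%:R * ka := mulr_ge0 (mulr_ge0 hMq (ler0n _ _)) hka.
have hrho : 0 < rho by rewrite lt_min !divr_gt0 // ltr_wpDl.
have hs4 : 0 < s / 4 by rewrite divr_gt0.
have half_gt0 : 0 < 1 / 2 :> R by rewrite divr_gt0.
have [mbar hmbar hsmall] :=
  small_parameter3 hmuhat (normr_ge0 C4) hrho (mulr_ge0 ha hHb) hs4 hP half_gt0.
exists rho, mbar, (error_const Mq (n + n)%:R ka C1).
split=> //; split=> //; split; first exact: error_const_gt0 hMq (ler0n _ _) hka (ltW hC1).
move=> mu x l /andP [hmu hmub] hx hl hdel hnear hFn.
have hmu_bar : 0 <= mu <= mbar by rewrite ltW.
have [hC4 hHb_small hka_small] := hsmall mu hmu_bar.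
have hmu_hat : 0 < mu <= muhat by rewrite hmu (le_trans hmub) // (andP hmbar).2.
have [_ [_ htr]] := htraj mu hmu_hat.
have htr_rho : enorm (col_mx (xmu mu) (lmu mu) - col_mx xs ls) <= rho.
  exact: le_trans htr (le_trans (ler_wpM2r (ltW hmu) (ler_norm C4)) hC4).
have hent := col_mx_dist_entries (ltW hnear) htr_rho.
have [hds hdr] := double_min_quarter s (r0 / (n%:R + 1)).
exact: (point_estimate hs hsA hsI hr0 hL hF' hsigma hC1 hmu hx hl hdel hent).
Qed.
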